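(* Let $|\psi\rangle\in(\mathbb{C}^d)^{\otimes n}$ be a normalized state such that every element of the stabilizer of $|\psi\rangle^{\otimes 2}$ is unitary. Let $g_1,g_2$ be local invertible operators, $g_k=\bigotimes_{i=1}^n g_k^{(i)}$ with $g_k^{(i)}\in\mathrm{GL}(d,\mathbb{C})$. Then $$p^{\mathrm{SEP}}_{\max}\!\left(g_1|\psi\rangle\otimes g_2|\psi\rangle\mapsto|\psi\rangle^{\otimes 2}\right)=p^{\mathrm{SEP}}_{\max}\!\left(g_1|\psi\rangle\mapsto|\psi\rangle\right)\,p^{\mathrm{SEP}}_{\max}\!\left(g_2|\psi\rangle\mapsto|\psi\rangle\right),$$ where initial states are normalized.
   Context: The two-copy states are regarded as $n$-partite states in which party $i$ holds subsystem $i$ of both copies (local dimension $d^2$). The stabilizer of $|\psi\rangle^{\otimes 2}$ is the set of $S=\bigotimes_i S^{(i)}$ with $S^{(i)}\in\mathrm{GL}(d^2,\mathbb{C})$ and $S|\psi\rangle^{\otimes 2}=|\psi\rangle^{\otimes 2}$. $p^{\mathrm{SEP}}_{\max}(|a\rangle\mapsto|b\rangle)$ denotes the maximal success probability of transforming $|a\rangle$ into $|b\rangle$ by separable operations with respect to the relevant party partition. A separable operation is one whose Kraus operators have product form over the parties, with $\sum_k M_k^\dagger M_k\le\mathbb{1}$. Its success probability is $\sum_k\|M_k|a\rangle\|^2$, summed over the branches with $M_k|a\rangle\propto|b\rangle$. *)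

From mathcomp Require Import all_boot all_order all_algebra.
From mathcomp Require Import complex.
From mathcomp Require Import boolp classical_sets reals.
Set Implicit Arguments. Unset Strict Implicit. Unset Printing Implicit Defensive.
Import Order.TTheory GRing.Theory Num.Theory.
Local Open Scope ring_scope.

Section Defs.
Variable R : realType.
Local Notation C := R[i].

Definition cmod2 (z : C) : R := (complex.Re z) ^+ 2 + (complex.Im z) ^+ 2.

Definition cconj (z : C) : C := Complex (complex.Re z) (- complex.Im z).

(* n-partite states with local basis indexed by the finite type L:
   vectors in (C^L)^{(x) n}, coordinates indexed by the basis |x_1 ... x_n>. *)
Definition state (n : nat) (L : finType) := {ffun 'I_n -> L} -> C.

(* a local operator on C^L, given by its matrix entries M y x = <y|M|x> *)
Definition locop (L : finType) := L -> L -> C.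

Definition prodop (n : nat) (L : finType) := 'I_n -> locop L.

Definition prodmx n L (M : prodop n L) (y x : {ffun 'I_n -> L}) : C :=
  \prod_(i < n) M i (y i) (x i).

Definition apply n L (M : prodop n L) (v : state n L) : state n L :=
  fun y => \sum_x prodmx M y x * v x.

Definition sqnorm n L (v : state n L) : R := \sum_x cmod2 (v x).

Definition normalize n L (v : state n L) : state n L :=
  fun x => (((Num.sqrt (sqnorm v))^-1)%:C)%C * v x.

Definition normalized n L (v : state n L) : Prop := sqnorm v = 1.

Definition invertible (L : finType) (M : locop L) : Prop :=
  exists N : locop L,
    (forall y x, \sum_z M y z * N z x = (y == x)%:R) /\
    (forall y x, \sum_z N y z * M z x = (y == x)%:R).

Definition unitary n L (S : prodop n L) : Prop :=
  forall x x', \sum_y cconj (prodmx S y x) * prodmx S y x' = (x == x')%:R.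

(* two-copy state a (x) b, regarded as n-partite with party i holding
   subsystem i of both copies (local basis L * L) *)
Definition tens2 n L (a b : state n L) : state n (L * L)%type :=
  fun x => a [ffun i => (x i).1] * b [ffun i => (x i).2].

Definition stab2_unitary n L (psi : state n L) : Prop :=
  forall S : prodop n (L * L)%type,
    (forall i, invertible (S i)) ->
    apply S (tens2 psi psi) = tens2 psi psi ->
    unitary S.

(* a separable operation: finitely many product Kraus operators M_k with
   sum_k M_k^dagger M_k <= 1, i.e. sum_k ||M_k v||^2 <= ||v||^2 for all v *)
Definition separable_op n L (K : nat) (M : 'I_K -> prodop n L) : Prop :=
  forall v : state n L, \sum_(k < K) sqnorm (apply (M k) v) <= sqnorm v.

Definition succ_prob n L (K : nat) (M : 'I_K -> prodop n L) (a b : state n L) : R :=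
  \sum_(k < K | `[< exists c : C, apply (M k) a = (fun x => c * b x) >])
     sqnorm (apply (M k) a).

Definition pmax_sep n L (a b : state n L) : R :=
  sup [set p : R | exists (K : nat) (M : 'I_K -> prodop n L),
                     separable_op M /\ p = succ_prob M a b].

End Defs.

From mathcomp Require Import all_boot all_order all_algebra.
From mathcomp Require Import complex.
From mathcomp Require Import boolp classical_sets reals.
From mathcomp Require Import ring.
Import Order.TTheory GRing.Theory Num.Theory.
Local Open Scope ring_scope.
Local Open Scope complex_scope.
Set Implicit Arguments. Unset Strict Implicit. Unset Printing Implicit Defensive.

(** Let [h_k] be the local inverse of [g_k].  The stabilizer hypothesis makes both [psi]
    and [psi (x) psi] states [Phi] whose local invertible stabilizer consists of isometries.
    For such a [Phi], a product operator [T] with [T Phi = c Phi], [c <> 0], is itself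
    invertible, hence [T / c] is an isometry.  Applied to [T = M_k g] for a successful
    branch [M_k] of a separable operation, this gives
    [||M_k v||^2 = |c_k|^2 ||g Phi||^2 ||h v||^2], so the success probability is at most
    [1 / (||h||^2 ||g Phi||^2)] with [||h||] the operator norm; the single Kraus operator
    [h / ||h||] attains it.  Both [||h||] and [||g Phi||] are multiplicative under the
    tensor product of the two copies. *)

(** * Local operators *)

Section LocalOperators.
Variables (R : realType) (L : finType).
Local Notation C := R[i].
Local Notation basis n := {ffun 'I_n -> L}.

Lemma cconjE (z : C) : cconj z = z^*.
Proof. by case: z. Qed.

Lemma cmod2E (z : C) : (cmod2 z)%:C = z * z^*.
Proof.
case: z => a b; rewrite /cmod2 /=; apply/eqP; rewrite eq_complex /=.
by apply/andP; split; apply/eqP; ring.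
Qed.

Lemma cmod2_ge0 (z : C) : 0 <= cmod2 z.
Proof. by rewrite addr_ge0 // sqr_ge0. Qed.

Lemma cmod2M (a b : C) : cmod2 (a * b) = cmod2 a * cmod2 b.
Proof.
apply: (@complexI R); rewrite rmorphM /= !cmod2E rmorphM /=.
by rewrite mulrACA.
Qed.

Lemma cmod2_eq0 (z : C) : (cmod2 z == 0) = (z == 0).
Proof.
case: z => a b; rewrite /cmod2 paddr_eq0 ?sqr_ge0 // !sqrf_eq0.
by rewrite eq_complex.
Qed.

Lemma cmod2R (x : R) : cmod2 x%:C = x ^+ 2.
Proof. by rewrite /cmod2 /= expr0n addr0. Qed.

Lemma cmod21 : cmod2 (1 : C) = 1.
Proof. by rewrite /cmod2 /= expr0n addr0 expr1n. Qed.

Lemma cmod20 : cmod2 (0 : C) = 0.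
Proof. by rewrite /cmod2 /= expr0n addr0. Qed.

Lemma sum_cmod2E (T : finType) (f : T -> C) :
  (\sum_t cmod2 (f t))%:C = \sum_t f t * (f t)^*.
Proof. by rewrite rmorph_sum; apply: eq_bigr => t _; apply: cmod2E. Qed.

Lemma sum_cmod2_gt0 (T : finType) (f : T -> C) t : f t != 0 -> 0 < \sum_t cmod2 (f t).
Proof.
move=> ft0; rewrite lt_def sumr_ge0 ?andbT => [|s _]; last exact: cmod2_ge0.
apply: contra ft0 => /eqP /psumr_eq0P ft; rewrite -cmod2_eq0 ft //.
by move=> s _; apply: cmod2_ge0.
Qed.

Lemma sqnorm_ge0 n (v : state R n L) : 0 <= sqnorm v.
Proof. by apply: sumr_ge0 => x _; apply: cmod2_ge0. Qed.

Lemma sqnormZ n (c : C) (v : state R n L) :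
  sqnorm (fun x => c * v x) = cmod2 c * sqnorm v.
Proof. by rewrite /sqnorm mulr_sumr; apply: eq_bigr => x _; rewrite cmod2M. Qed.

Lemma sqnorm_eq0 n (v : state R n L) : sqnorm v = 0 -> v = fun=> 0.
Proof.
move=> v0; apply: funext => x; apply/eqP; rewrite -cmod2_eq0.
by apply/eqP; apply: psumr_eq0P v0 _ _ => // y _; apply: cmod2_ge0.
Qed.

Lemma sum_delta (T : finType) (u : T) (F : T -> C) : \sum_t (t == u)%:R * F t = F u.
Proof.
rewrite (bigD1 u) //= eqxx mul1r big1 ?addr0 // => t /negbTE->.
by rewrite mul0r.
Qed.

Definition locid : locop R L := fun y x => (y == x)%:R.

Definition locmul (A B : locop R L) : locop R L := fun y x => \sum_z A y z * B z x.

Lemma locmul1l (A : locop R L) : locmul locid A =2 A.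
Proof.
by move=> y x; rewrite /locmul /locid; under eq_bigr do rewrite eq_sym; rewrite sum_delta.
Qed.

Lemma locid_invertible : invertible locid.
Proof. by exists locid; split; apply: locmul1l. Qed.

Lemma invertibleZ (a : C) (M : locop R L) :
  a != 0 -> invertible M -> invertible (fun y x => a * M y x).
Proof.
move=> a0 [N [MN NM]]; exists (fun y x => a^-1 * N y x); split => y x.
  by rewrite -MN; apply: eq_bigr => z _; rewrite mulrACA mulfV // mul1r.
by rewrite -NM; apply: eq_bigr => z _; rewrite mulrACA mulVf // mul1r.
Qed.

Definition idop {n} : prodop R n L := fun=> locid.

Definition compop n (A B : prodop R n L) : prodop R n L := fun i => locmul (A i) (B i).

Lemma prodmx_id n (y x : basis n) : prodmx idop y x = (y == x)%:R.
Proof.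
rewrite /prodmx /idop /locid; have [->|yx] := eqVneq y x.
  by rewrite big1 // => i _; rewrite eqxx.
have [i yxi] : exists i, y i != x i.
  by apply/existsP; apply: contraNT yx => /existsPn yx; apply/eqP/ffunP => i; apply/eqP/negPn.
by rewrite (bigD1 i) //= (negbTE yxi) mul0r.
Qed.

Lemma apply_id n (v : state R n L) : apply idop v = v.
Proof.
by apply: funext => y; rewrite /apply; under eq_bigr do rewrite prodmx_id eq_sym; rewrite sum_delta.
Qed.

Lemma apply_comp n (A B : prodop R n L) v : apply (compop A B) v = apply A (apply B v).
Proof.
have prodmx_comp y x : prodmx (compop A B) y x = \sum_z prodmx A y z * prodmx B z x.
  by rewrite /prodmx /compop /locmul bigA_distr_bigA; apply: eq_bigr => z _; rewrite -big_split.
apply: funext => y; rewrite /apply.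
under eq_bigr do rewrite prodmx_comp mulr_suml.
rewrite exchange_big; apply: eq_bigr => z _ /=.
by rewrite mulr_sumr; apply: eq_bigr => x _; rewrite mulrA.
Qed.

Lemma apply_inv n (A B : prodop R n L) :
  (forall i, locmul (A i) (B i) =2 locid) -> forall v, apply A (apply B v) = v.
Proof.
move=> AB v; rewrite -apply_comp -[RHS]apply_id; congr apply.
by apply: funext => i; apply: funext => y; apply: funext => x; apply: AB.
Qed.

Lemma prodop_inverse n (g : prodop R n L) : (forall i, invertible (g i)) ->
  exists h : prodop R n L,
    (forall i, locmul (g i) (h i) =2 locid) /\ (forall i, locmul (h i) (g i) =2 locid).
Proof. by move=> /choice[h gh]; exists h; split => i; case: (gh i). Qed.

Lemma applyZ n (M : prodop R n L) (c : C) (v : state R n L) :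
  apply M (fun x => c * v x) = (fun y => c * apply M v y).
Proof. by apply: funext => y; rewrite /apply mulr_sumr; apply: eq_bigr => x _; rewrite mulrCA. Qed.

Lemma apply0 n (M : prodop R n L) : apply M (fun=> 0) = fun=> 0.
Proof. by apply: funext => y; rewrite /apply big1 // => x _; rewrite mulr0. Qed.

Lemma apply_nil (M : prodop R 0 L) (v : state R 0 L) : apply M v = v.
Proof.
apply: funext => y; rewrite /apply (bigD1 y) //= big1 ?addr0 => [|x].
  by rewrite /prodmx big_ord0 mul1r.
by case/eqP; apply/ffunP => -[].
Qed.

Lemma unitary_sqnorm n (S : prodop R n L) (v : state R n L) :
  unitary S -> sqnorm (apply S v) = sqnorm v.
Proof.
move=> SU; apply: (@complexI R); rewrite !sum_cmod2E /apply.
transitivity (\sum_x \sum_x' v x * (v x')^* *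
    \sum_y prodmx S y x * (prodmx S y x')^*).
  under eq_bigr do rewrite rmorph_sum /= mulr_suml.
  rewrite exchange_big; apply: eq_bigr => x _ /=.
  under eq_bigr do rewrite mulr_sumr.
  rewrite exchange_big; apply: eq_bigr => x' _ /=.
  by rewrite mulr_sumr; apply: eq_bigr => y _; rewrite rmorphM /=; ring.
have SU' x x' : \sum_y prodmx S y x * (prodmx S y x')^* = (x' == x)%:R.
  by rewrite -SU; apply: eq_bigr => y _; rewrite cconjE mulrC.
apply: eq_bigr => x _; under eq_bigr do rewrite SU' mulrC.
exact: sum_delta.
Qed.

Definition upd n (y : basis n) (i : 'I_n) (z : L) : basis n :=
  [ffun j => if j == i then z else y j].

Lemma upd_same n (y : basis n) i z : upd y i z i = z.
Proof. by rewrite ffunE eqxx. Qed.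

Lemma upd_other n (y : basis n) i z j : j != i -> upd y i z j = y j.
Proof. by rewrite ffunE => /negbTE->. Qed.

Lemma upd_id n (y : basis n) i : upd y i (y i) = y.
Proof. by apply/ffunP => j; rewrite ffunE; case: eqP => [->|]. Qed.

Lemma prodmx_split n (M : prodop R n L) i y x :
  prodmx M y x = M i (y i) (x i) * \prod_(j | j != i) M j (y j) (x j).
Proof. by rewrite /prodmx (bigD1 i). Qed.

Definition off_delta n (i : 'I_n) (y x : basis n) : C :=
  \prod_(j | j != i) locid (y j) (x j).

Lemma off_deltaE n i (y x : basis n) : off_delta i y x = (x == upd y i (x i))%:R.
Proof.
rewrite /off_delta /locid; have [xy|xy] := eqVneq x.
  by apply: big1 => j ji; rewrite xy upd_other // eqxx.
have [j ji yxj] : exists2 j, j != i & y j != x j.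
  apply/exists_inP; apply: contraNT xy => /exists_inPn yx; apply/eqP/ffunP => j.
  by rewrite ffunE; case: eqP => [->//|/eqP ji]; apply/eqP; rewrite eq_sym; apply/negPn/yx.
by rewrite (bigD1 j) //= (negbTE yxj) mul0r.
Qed.

Lemma off_delta_upd n i (y0 y : basis n) z : off_delta i y0 (upd y i z) = off_delta i y0 y.
Proof. by apply: eq_bigr => j ji; rewrite upd_other. Qed.

Lemma sum_off_delta n i (y : basis n) (F : basis n -> C) :
  \sum_x off_delta i y x * F x = \sum_z F (upd y i z).
Proof.
under [RHS]eq_bigr do rewrite -(sum_delta _ F).
rewrite exchange_big; apply: eq_bigr => x _ /=.
rewrite -mulr_suml off_deltaE (bigD1 (x i)) //= big1 ?addr0 // => z zx.
by case: eqP => // xE; rewrite xE upd_same eqxx in zx.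
Qed.

Definition site_op n (i : 'I_n) (A : locop R L) : prodop R n L :=
  fun j => if j == i then A else locid.

Lemma apply_site_op n i A (v : state R n L) y :
  apply (site_op i A) v y = \sum_z A (y i) z * v (upd y i z).
Proof.
under [RHS]eq_bigr => z _ do rewrite -{1}[z](upd_same y i z).
rewrite -(sum_off_delta i y (fun x => A (y i) (x i) * v x)); apply: eq_bigr => x _.
rewrite (prodmx_split _ i) /site_op eqxx [RHS]mulrCA [RHS]mulrA; congr (_ * _ * _).
by apply: eq_bigr => j /negbTE->.
Qed.

Lemma site_op_invertible n (i : 'I_n) A : invertible A -> forall j, invertible (site_op i A j).
Proof. by move=> Ainv j; rewrite /site_op; case: eqP => _ //; apply: locid_invertible. Qed.

Lemma sum_left_kernel_apply n (M : prodop R n L) i (w : L -> C) v y :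
  (forall x, \sum_z w z * M i z x = 0) -> \sum_z w z * apply M v (upd y i z) = 0.
Proof.
move=> wM; under eq_bigr do rewrite /apply mulr_sumr.
rewrite exchange_big big1 // => x _ /=.
have offsite z : \prod_(j | j != i) M j (upd y i z j) (x j) = \prod_(j | j != i) M j (y j) (x j).
  by apply: eq_bigr => j ji; rewrite upd_other.
under eq_bigr do rewrite (prodmx_split _ i) upd_same offsite !mulrA -[_ * _ * v x]mulrA.
by rewrite -mulr_suml wM mul0r.
Qed.

Lemma sum_enum_val (F : L -> C) : \sum_z F z = \sum_(b < #|L|) F (enum_val b).
Proof.
rewrite (reindex (@enum_val L predT)) //.
by exists enum_rank => [b _|z _]; rewrite ?enum_valK ?enum_rankK.
Qed.

Lemma not_invertible_left_kernel (M : locop R L) :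
  ~ invertible M -> exists2 w : L -> C, (exists z, w z != 0) & forall x, \sum_y w y * M y x = 0.
Proof.
move=> Mninv; pose A : 'M[C]_#|L| := \matrix_(a, b) M (enum_val a) (enum_val b).
have Amul_entry (B : 'M[C]_#|L|) y x :
    \sum_z M y z * B (enum_rank z) (enum_rank x) = (A *m B) (enum_rank y) (enum_rank x).
  by rewrite sum_enum_val mxE; apply: eq_bigr => b _; rewrite mxE !enum_rankK enum_valK.
have mulA_entry (B : 'M[C]_#|L|) y x :
    \sum_z B (enum_rank y) (enum_rank z) * M z x = (B *m A) (enum_rank y) (enum_rank x).
  by rewrite sum_enum_val mxE; apply: eq_bigr => b _; rewrite mxE !enum_rankK enum_valK.
have /det0P[v v0 vA] : \det A == 0.
  apply: contraT; rewrite -unitfE -unitmxE => Aunit; case: Mninv.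
  exists (fun z x => invmx A (enum_rank z) (enum_rank x)); split => y x.
    by rewrite /locmul Amul_entry mulmxV // mxE (inj_eq enum_rank_inj).
  by rewrite /locmul mulA_entry mulVmx // mxE (inj_eq enum_rank_inj).
exists (fun z => v 0 (enum_rank z)) => [|x].
  apply/existsP; apply: contraNT v0 => /existsPn v0; apply/eqP/matrixP => a b.
  by rewrite mxE ord1 -[b]enum_valK; apply/eqP/negPn/v0.
transitivity ((v *m A) 0 (enum_rank x)); last by rewrite vA mxE.
by rewrite mxE sum_enum_val; apply: eq_bigr => b _; rewrite mxE enum_valK enum_rankK.
Qed.

Definition rank1_pert (w : L -> C) : locop R L := fun y x => locid y x + (w y)^* * w x.

Lemma rank1_pert_invertible w : invertible (rank1_pert w).
Proof.
apply: contrapT => /not_invertible_left_kernel[u [z uz0] uA].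
pose a := \sum_y u y * (w y)^*.
have uE x : u x = - a * w x.
  move/eqP: (uA x); rewrite /rank1_pert /locid; under eq_bigr do rewrite mulrDr.
  rewrite big_split /=; under eq_bigr do rewrite mulrC; rewrite sum_delta.
  rewrite addr_eq0 => /eqP->; rewrite mulNr /a mulr_suml; congr -%R.
  by apply: eq_bigr => y _; rewrite mulrA.
have a0 : a * (1 + (\sum_y cmod2 (w y))%:C) = 0.
  rewrite sum_cmod2E mulrDr mulr1 mulr_sumr {1}/a.
  by under eq_bigr do rewrite uE -mulrA mulNr; rewrite sumrN addNr.
suff : a = 0 by move=> a0'; move: uz0; rewrite uE a0' oppr0 mul0r eqxx.
move/eqP: a0; rewrite mulf_eq0 => /orP[/eqP //|]; rewrite -[1](rmorph1 (real_complex R)) -rmorphD.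
rewrite (inj_eq (@complexI R)) paddr_eq0 ?ler01 ?sumr_ge0 // => [|y _]; last exact: cmod2_ge0.
by rewrite oner_eq0.
Qed.

Lemma rank1_pert_fixes n (T : prodop R n L) i (w : L -> C) (Phi : state R n L) c :
  (forall x, \sum_y w y * T i y x = 0) -> apply T Phi = (fun x => c * Phi x) -> c != 0 ->
  apply (site_op i (rank1_pert w)) Phi = Phi.
Proof.
move=> wT TPhi c0; have PhiE x : Phi x = c^-1 * apply T Phi x.
  by rewrite TPhi mulrA mulVf ?mul1r.
have wPhi y : \sum_z w z * Phi (upd y i z) = 0.
  under eq_bigr do rewrite PhiE mulrCA.
  by rewrite -mulr_sumr sum_left_kernel_apply ?mulr0.
apply: funext => y; rewrite apply_site_op /rank1_pert /locid.
under eq_bigr do rewrite mulrDl [y i == _]eq_sym -mulrA.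
by rewrite big_split /= sum_delta upd_id -mulr_sumr wPhi mulr0 addr0.
Qed.

(** * States stabilized only by isometries *)

Definition stab_isometric n (Phi : state R n L) : Prop :=
  forall S : prodop R n L, (forall i, invertible (S i)) -> apply S Phi = Phi ->
  forall v, sqnorm (apply S v) = sqnorm v.

(* A singular factor [T i] has a left null vector [w]; the rank-one perturbation
   [1 + |conj w><conj w|] at site [i] then fixes [Phi = c^-1 T Phi] but multiplies the
   product vector [conj w (x) |z0 ... z0>] by [1 + ||w||^2]. *)
Lemma stab_isometric_invertible n (Phi : state R n L) (T : prodop R n L) c :
  stab_isometric Phi -> apply T Phi = (fun x => c * Phi x) -> c != 0 ->
  forall i, invertible (T i).
Proof.
move=> Phi_iso TPhi c0 i; apply: contrapT => /not_invertible_left_kernel[w [z0 wz0] wT].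
pose s := \sum_z cmod2 (w z); have s_gt0 : 0 < s := sum_cmod2_gt0 wz0.
pose y0 : basis n := [ffun=> z0].
pose v0 : state R n L := fun x => (w (x i))^* * off_delta i y0 x.
have Sv0 : apply (site_op i (rank1_pert w)) v0 = (fun y => (1 + s)%:C * v0 y).
  apply: funext => y; rewrite apply_site_op /v0 /rank1_pert /locid.
  under eq_bigr do rewrite upd_same off_delta_upd mulrDl [y i == _]eq_sym.
  rewrite big_split /= sum_delta.
  have -> : \sum_z (w (y i))^* * w z * ((w z)^* * off_delta i y0 y) =
            s%:C * ((w (y i))^* * off_delta i y0 y).
    by rewrite /s sum_cmod2E mulr_suml; apply: eq_bigr => z _; ring.
  by rewrite rmorphD rmorph1 /=; ring.
have v0_norm : sqnorm v0 = s.
  have offK x : off_delta i y0 x * (off_delta i y0 x)^* = off_delta i y0 x.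
    by rewrite off_deltaE; case: (_ == _); rewrite /= ?rmorph1 ?rmorph0 ?mulr1 ?mulr0.
  apply: (@complexI R); rewrite /sqnorm /s !sum_cmod2E.
  transitivity (\sum_x off_delta i y0 x * ((w (x i))^* * w (x i))).
    by apply: eq_bigr => x _; rewrite /v0 rmorphM /= conjCK -[in RHS]offK; ring.
  by rewrite sum_off_delta; apply: eq_bigr => z _; rewrite upd_same mulrC.
have Sinv := site_op_invertible i (rank1_pert_invertible w).
have := Phi_iso _ Sinv (rank1_pert_fixes wT TPhi c0) v0.
rewrite Sv0 sqnormZ v0_norm cmod2R => stretch.
have : s * s * (2 + s) = (1 + s) ^+ 2 * s - s by ring.
by rewrite stretch subrr => /eqP; rewrite !mulf_eq0 (gt_eqF s_gt0) /= gt_eqF // addr_gt0.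
Qed.

Definition scale_first k (a : C) (M : prodop R k.+1 L) : prodop R k.+1 L :=
  fun j => if j == ord0 then (fun y x => a * M j y x) else M j.

Lemma apply_scale_first k a (M : prodop R k.+1 L) v :
  apply (scale_first a M) v = (fun y => a * apply M v y).
Proof.
apply: funext => y; rewrite /apply mulr_sumr; apply: eq_bigr => x _.
rewrite !(prodmx_split _ ord0) /scale_first eqxx -!mulrA; congr (_ * (_ * (_ * _))).
by apply: eq_bigr => j /negbTE->.
Qed.

Lemma scale_first_invertible k a (M : prodop R k.+1 L) :
  a != 0 -> (forall i, invertible (M i)) -> forall i, invertible (scale_first a M i).
Proof. by move=> a0 Minv i; rewrite /scale_first; case: eqP => _; [apply: invertibleZ|]. Qed.

Lemma stab_isometric_scaled n (Phi : state R n L) (T : prodop R n L) c :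
  sqnorm Phi = 1 -> stab_isometric Phi -> apply T Phi = (fun x => c * Phi x) -> c != 0 ->
  forall v, sqnorm (apply T v) = cmod2 c * sqnorm v.
Proof.
(* With no party to absorb the scalar [c^-1], the case [n = 0] is treated apart. *)
case: n => [|k] in Phi T * => Phi1 Phi_iso TPhi c0 v.
  have := congr1 (@sqnorm R 0 L) TPhi; rewrite apply_nil sqnormZ Phi1 mulr1 => <-.
  by rewrite apply_nil mul1r.
have Sinv := scale_first_invertible (invr_neq0 c0) (stab_isometric_invertible Phi_iso TPhi c0).
have SPhi : apply (scale_first c^-1 T) Phi = Phi.
  by rewrite apply_scale_first TPhi; apply: funext => x; rewrite mulrA mulVf ?mul1r.
rewrite -(Phi_iso _ Sinv SPhi v) apply_scale_first sqnormZ mulrA -cmod2M.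
by rewrite mulfV // cmod21 mul1r.
Qed.

Definition contraction_factors n (h : prodop R n L) : set R :=
  [set mu | 0 <= mu /\ forall v, mu * sqnorm (apply h v) <= sqnorm v].

(** * Maximal success probability *)

(* [max_contraction h = 1 / ||h||^2] for the operator norm [||h||]. *)
Definition max_contraction n (h : prodop R n L) : R := sup (contraction_factors h).

Lemma contraction_factors0 n (h : prodop R n L) : contraction_factors h 0.
Proof. by split => // v; rewrite mul0r sqnorm_ge0. Qed.

Section MaxContraction.
Variables (n : nat) (h : prodop R n L).
Hypothesis h_nz : exists u, sqnorm (apply h u) = 1.

Lemma has_sup_contraction_factors : has_sup (contraction_factors h).
Proof.
split; first by exists 0; apply: contraction_factors0.
by case: h_nz => u hu; exists (sqnorm u) => mu [_ /(_ u)]; rewrite hu mulr1.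
Qed.

Lemma max_contraction_mem : contraction_factors h (max_contraction h).
Proof.
split; first exact: sup_upper_bound has_sup_contraction_factors _ (contraction_factors0 h).
move=> v; have [->|hv0] := eqVneq (sqnorm (apply h v)) 0; first by rewrite mulr0 sqnorm_ge0.
have hv_gt0 : 0 < sqnorm (apply h v) by rewrite lt_def hv0 sqnorm_ge0.
rewrite -ler_pdivlMr //; apply: ge_sup; first by exists 0; apply: contraction_factors0.
by move=> mu [_ muh]; rewrite ler_pdivlMr.
Qed.

Lemma le_max_contraction mu K : 0 <= mu -> 0 <= K ->
  (forall v, mu * sqnorm (apply h v) <= K * sqnorm v) -> mu <= K * max_contraction h.
Proof.
move=> mu_ge0 K_ge0 muK; have [K0|K_neq0] := eqVneq K 0.
  by case: h_nz => u hu; move: (muK u); rewrite hu K0 !mul0r mulr1.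
have K_gt0 : 0 < K by rewrite lt_def K_neq0.
rewrite mulrC -ler_pdivrMr //; apply: sup_upper_bound has_sup_contraction_factors _ _.
split => [|v]; first exact: divr_ge0.
by rewrite mulrAC ler_pdivrMr // [_ * K]mulrC.
Qed.

End MaxContraction.

Definition succ_probs n (a b : state R n L) : set R :=
  [set p | exists K (M : 'I_K -> prodop R n L), separable_op M /\ p = succ_prob M a b].

Lemma succ_prob_ge0 n K (M : 'I_K -> prodop R n L) a b : 0 <= succ_prob M a b.
Proof. by apply: sumr_ge0 => k _; apply: sqnorm_ge0. Qed.

Lemma has_sup_succ_probs n (a b : state R n L) : has_sup (succ_probs a b).
Proof.
split.
  exists 0, 0%N, (fun=> idop); split; last by rewrite /succ_prob big_ord0.
  by move=> v; rewrite big_ord0 sqnorm_ge0.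
exists (sqnorm a) => _ [K [M [M_sep ->]]]; apply: le_trans (M_sep a).
by rewrite /succ_prob big_mkcond; apply: ler_sum => k _; case: ifP => _ //; apply: sqnorm_ge0.
Qed.

Lemma succ_probs_single n (M : prodop R n L) (a b : state R n L) c :
  (forall v, sqnorm (apply M v) <= sqnorm v) -> apply M a = (fun x => c * b x) ->
  succ_probs a b (sqnorm (apply M a)).
Proof.
move=> M_contr Ma; exists 1%N, (fun=> M); split; first by move=> v; rewrite big_ord1.
by rewrite /succ_prob big_mkcond big_ord1 asboolT //; exists c.
Qed.

Lemma succ_probs_contraction n (h : prodop R n L) (A Phi : state R n L) kap mu :
  sqnorm Phi = 1 -> sqnorm A = 1 -> apply h A = (fun x => kap * Phi x) ->
  contraction_factors h mu -> exists2 p, succ_probs A Phi p & mu * cmod2 kap <= p.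
Proof.
move=> Phi1 A1 hA [mu_ge0 muh].
have kapE : cmod2 kap = sqnorm (apply h A) by rewrite hA sqnormZ Phi1 mulr1.
case: n => [|k] in h A Phi Phi1 A1 hA muh kapE *.
  exists (sqnorm (apply h A)); first by apply: succ_probs_single hA => v; rewrite apply_nil.
  by rewrite -kapE ler_piMl ?cmod2_ge0 //; move: (muh A); rewrite apply_nil A1 mulr1.
pose M := scale_first (Num.sqrt mu)%:C h.
have ME v : sqnorm (apply M v) = mu * sqnorm (apply h v).
  by rewrite apply_scale_first sqnormZ cmod2R sqr_sqrtr.
exists (sqnorm (apply M A)); last by rewrite ME kapE.
apply: (succ_probs_single (c := (Num.sqrt mu)%:C * kap)) => [v|]; first by rewrite ME muh.
by rewrite apply_scale_first hA; apply: funext => x; rewrite mulrA.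
Qed.

Lemma succ_prob_contraction n (Phi A : state R n L) (g h : prodop R n L) a
    K (M : 'I_K -> prodop R n L) :
  sqnorm Phi = 1 -> stab_isometric Phi -> (forall v, apply g (apply h v) = v) ->
  apply g Phi = (fun x => a * A x) -> a != 0 -> separable_op M ->
  contraction_factors h (cmod2 a * succ_prob M A Phi).
Proof.
move=> Phi1 Phi_iso ghK gPhi a0 M_sep.
split=> [|v]; first by rewrite mulr_ge0 ?cmod2_ge0 ?succ_prob_ge0.
apply: le_trans (M_sep v); rewrite /succ_prob mulrAC mulr_sumr big_mkcond.
apply: ler_sum => k _; case: asboolP => [[c MA]|_]; last exact: sqnorm_ge0.
rewrite MA sqnormZ Phi1 mulr1; have [->|c0] := eqVneq c 0.
  by rewrite cmod20 mulr0 sqnorm_ge0.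
(* [M k g] scales [Phi] by [a c], so it is [|a c|] times an isometry. *)
have MgPhi : apply (compop (M k) g) Phi = (fun x => (a * c) * Phi x).
  by rewrite apply_comp gPhi applyZ MA; apply: funext => x; rewrite mulrA.
have := stab_isometric_scaled Phi1 Phi_iso MgPhi (mulf_neq0 a0 c0) (apply h v).
by rewrite apply_comp ghK cmod2M mulrAC => ->.
Qed.

Lemma sqnorm_normalize n (u : state R n L) : 0 < sqnorm u -> sqnorm (normalize u) = 1.
Proof. by move=> u_gt0; rewrite sqnormZ cmod2R exprVn sqr_sqrtr ?ltW // mulVf ?gt_eqF. Qed.

Lemma normalizeK n (u : state R n L) :
  0 < sqnorm u -> u = (fun x => (Num.sqrt (sqnorm u))%:C * normalize u x).
Proof.
move=> u_gt0; apply: funext => x; rewrite /normalize mulrA -rmorphM /=.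
by rewrite mulfV ?mul1r // gt_eqF ?sqrtr_gt0.
Qed.

Lemma pmax_sepE n (Phi : state R n L) (g h : prodop R n L) :
  sqnorm Phi = 1 -> stab_isometric Phi ->
  (forall i, locmul (g i) (h i) =2 locid) -> (forall i, locmul (h i) (g i) =2 locid) ->
  pmax_sep (normalize (apply g Phi)) Phi = max_contraction h / sqnorm (apply g Phi).
Proof.
move=> Phi1 Phi_iso /apply_inv ghK /apply_inv hgK.
set u := apply g Phi; set N := sqnorm u.
have N_gt0 : 0 < N.
  rewrite lt_def sqnorm_ge0 andbT; apply/eqP => /sqnorm_eq0 u0.
  move: Phi1; rewrite -(hgK Phi) -/u u0 apply0 /sqnorm big1 ?cmod20 //.
  by move=> /esym/eqP; rewrite oner_eq0.
have r_gt0 : 0 < Num.sqrt N by rewrite sqrtr_gt0.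
have hA : apply h (normalize u) = (fun x => (Num.sqrt N)^-1%:C * Phi x).
  by rewrite applyZ hgK.
have h_nz : exists w, sqnorm (apply h w) = 1 by exists u; rewrite hgK.
apply/le_anti/andP; split.
  apply: ge_sup (has_sup_succ_probs _ _).1 _ => _ [K [M [M_sep ->]]].
  rewrite ler_pdivlMr // mulrC -[N](sqr_sqrtr (ltW N_gt0)) -cmod2R.
  apply: sup_upper_bound (has_sup_contraction_factors h_nz) _ _.
  apply: succ_prob_contraction M_sep => //; first exact: normalizeK.
  by rewrite -cmod2_eq0 cmod2R sqrf_eq0 gt_eqF.
have [p Ap le_p] :=
  succ_probs_contraction Phi1 (sqnorm_normalize N_gt0) hA (max_contraction_mem h_nz).
have -> : max_contraction h / N = max_contraction h * cmod2 (Num.sqrt N)^-1%:C.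
  by rewrite cmod2R exprVn sqr_sqrtr // ltW.
by apply: le_trans le_p _; apply: sup_upper_bound (has_sup_succ_probs _ _) _ Ap.
Qed.

End LocalOperators.

Arguments locid {R L}.
Arguments idop {R L n}.

(** * Two copies *)

Section TwoCopies.
Variables (R : realType) (L : finType).
Local Notation C := R[i].
Local Notation basis n := {ffun 'I_n -> L}.

Definition pairf n (x1 x2 : basis n) : {ffun 'I_n -> (L * L)%type} := [ffun i => (x1 i, x2 i)].
Definition fstf n (x : {ffun 'I_n -> (L * L)%type}) : basis n := [ffun i => (x i).1].
Definition sndf n (x : {ffun 'I_n -> (L * L)%type}) : basis n := [ffun i => (x i).2].

Lemma pairfK n (x : {ffun 'I_n -> (L * L)%type}) : pairf (fstf x) (sndf x) = x.
Proof. by apply/ffunP => i; rewrite !ffunE; case: (x i). Qed.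

Lemma fstf_pair n (x1 x2 : basis n) : fstf (pairf x1 x2) = x1.
Proof. by apply/ffunP => i; rewrite !ffunE. Qed.

Lemma sndf_pair n (x1 x2 : basis n) : sndf (pairf x1 x2) = x2.
Proof. by apply/ffunP => i; rewrite !ffunE. Qed.

Lemma sum_pairf (V : nmodType) n (F : {ffun 'I_n -> (L * L)%type} -> V) :
  \sum_x F x = \sum_x1 \sum_x2 F (pairf x1 x2).
Proof.
rewrite pair_big (reindex (fun p => pairf p.1 p.2)) //.
exists (fun x => (fstf x, sndf x)) => [[x1 x2] _|x _]; last by rewrite pairfK.
by rewrite fstf_pair sndf_pair.
Qed.

Definition tensop n (A B : prodop R n L) : prodop R n (L * L)%type :=
  fun i y x => A i y.1 x.1 * B i y.2 x.2.

Lemma tens2_pair n (a b : state R n L) x1 x2 : tens2 a b (pairf x1 x2) = a x1 * b x2.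
Proof. by rewrite /tens2 -/(fstf _) -/(sndf _) fstf_pair sndf_pair. Qed.

Lemma apply_tens_pair n (A B : prodop R n L) w y1 y2 :
  apply (tensop A B) w (pairf y1 y2) =
  \sum_x1 \sum_x2 prodmx A y1 x1 * prodmx B y2 x2 * w (pairf x1 x2).
Proof.
rewrite /apply sum_pairf; apply: eq_bigr => x1 _; apply: eq_bigr => x2 _.
by rewrite /prodmx /tensop -big_split; congr (_ * _); apply: eq_bigr => i _; rewrite !ffunE.
Qed.

Lemma apply_tens2 n (A B : prodop R n L) (a b : state R n L) :
  apply (tensop A B) (tens2 a b) = tens2 (apply A a) (apply B b).
Proof.
apply: funext => x; rewrite -[x]pairfK apply_tens_pair tens2_pair /apply mulr_suml.
apply: eq_bigr => x1 _; rewrite mulr_sumr; apply: eq_bigr => x2 _.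
by rewrite tens2_pair mulrACA.
Qed.

Lemma sqnorm_tens2 n (a b : state R n L) : sqnorm (tens2 a b) = sqnorm a * sqnorm b.
Proof.
rewrite /sqnorm sum_pairf mulr_suml; apply: eq_bigr => x1 _.
by rewrite mulr_sumr; apply: eq_bigr => x2 _; rewrite tens2_pair cmod2M.
Qed.

Lemma normalize_tens2 n (a b : state R n L) :
  normalize (tens2 a b) = tens2 (normalize a) (normalize b).
Proof.
apply: funext => x; rewrite -[x]pairfK /normalize !tens2_pair sqnorm_tens2.
by rewrite sqrtrM ?sqnorm_ge0 // invfM rmorphM /=; ring.
Qed.

Lemma locmul_tensop n (A B A' B' : prodop R n L) i :
  locmul (A i) (A' i) =2 locid -> locmul (B i) (B' i) =2 locid ->
  locmul (tensop A B i) (tensop A' B' i) =2 locid.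
Proof.
move=> AA' BB' [y1 y2] [x1 x2].
have -> : locid (y1, y2) (x1, x2) = locid y1 x1 * locid y2 x2 :> C.
  by rewrite /locid xpair_eqE -mulnb natrM.
rewrite -AA' -BB' /locmul mulr_suml; under [RHS]eq_bigr do rewrite mulr_sumr.
by rewrite pair_big; apply: eq_bigr => -[z1 z2] _; rewrite /tensop mulrACA.
Qed.

Lemma contraction_factors_tens n (h1 h2 : prodop R n L) mu1 mu2 :
  contraction_factors h1 mu1 -> contraction_factors h2 mu2 ->
  contraction_factors (tensop h1 h2) (mu1 * mu2).
Proof.
move=> [mu1_ge0 h1c] [mu2_ge0 h2c]; split=> [|w]; first exact: mulr_ge0.
pose col y2 : state R n L := fun x1 => apply h2 (fun x2 => w (pairf x1 x2)) y2.
have -> : sqnorm (apply (tensop h1 h2) w) = \sum_y2 sqnorm (apply h1 (col y2)).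
  rewrite /sqnorm sum_pairf exchange_big; apply: eq_bigr => y2 _; apply: eq_bigr => y1 _.
  rewrite apply_tens_pair /apply; congr cmod2; apply: eq_bigr => x1 _.
  by rewrite mulr_sumr; apply: eq_bigr => x2 _; rewrite mulrA.
apply: (@le_trans _ _ (\sum_y2 mu2 * sqnorm (col y2))).
  rewrite mulr_sumr; apply: ler_sum => y2 _; rewrite [mu1 * _]mulrC -mulrA.
  exact: ler_wpM2l (h1c _).
rewrite -mulr_sumr /sqnorm exchange_big mulr_sumr [X in _ <= X]sum_pairf.
by apply: ler_sum => x1 _; apply: h2c.
Qed.

Lemma max_contraction_tens n (h1 h2 : prodop R n L) :
  (exists u1, sqnorm (apply h1 u1) = 1) -> (exists u2, sqnorm (apply h2 u2) = 1) ->
  max_contraction (tensop h1 h2) = max_contraction h1 * max_contraction h2.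
Proof.
move=> h1_nz h2_nz; have h12_nz : exists u, sqnorm (apply (tensop h1 h2) u) = 1.
  case: h1_nz h2_nz => [u1 hu1] [u2 hu2]; exists (tens2 u1 u2).
  by rewrite apply_tens2 sqnorm_tens2 hu1 hu2 mulr1.
have [Q1_ge0 _] := max_contraction_mem h1_nz.
have [Q12_ge0 Q12c] := max_contraction_mem h12_nz.
apply/le_anti/andP; split; last first.
  apply: sup_upper_bound (has_sup_contraction_factors h12_nz) _ _.
  exact: contraction_factors_tens (max_contraction_mem h1_nz) (max_contraction_mem h2_nz).
apply: (le_max_contraction h2_nz Q12_ge0 Q1_ge0) => v2.
rewrite [max_contraction h1 * _]mulrC.
apply: (le_max_contraction h1_nz _ (sqnorm_ge0 v2)) => [|v1]; first by rewrite mulr_ge0 ?sqnorm_ge0.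
have := Q12c (tens2 v1 v2); rewrite apply_tens2 !sqnorm_tens2.
by rewrite mulrA mulrAC [sqnorm v2 * _]mulrC.
Qed.

Lemma stab2_isometric n (psi : state R n L) :
  stab2_unitary psi -> stab_isometric (tens2 psi psi).
Proof. by move=> psi_stab S Sinv Sfix v; apply: unitary_sqnorm; apply: psi_stab. Qed.

Lemma stab2_isometric_single n (psi : state R n L) :
  sqnorm psi = 1 -> stab2_unitary psi -> stab_isometric psi.
Proof.
move=> psi1 psi_stab S Sinv Sfix v.
have SIinv i : invertible (tensop S idop i).
  have [N [SN NS]] := Sinv i.
  by exists (tensop (fun=> N) idop i); split; apply: locmul_tensop => //; apply: locmul1l.
have SIfix : apply (tensop S idop) (tens2 psi psi) = tens2 psi psi.
  by rewrite apply_tens2 Sfix apply_id.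
have := unitary_sqnorm (tens2 v psi) (psi_stab _ SIinv SIfix).
by rewrite apply_tens2 apply_id !sqnorm_tens2 psi1 !mulr1.
Qed.

End TwoCopies.

Unset Implicit Arguments. Set Strict Implicit. Set Printing Implicit Defensive.

Theorem mainTheorem7 (R : realType) (n d : nat) (psi : state R n 'I_d)
    (g1 g2 : prodop R n 'I_d) :
  normalized psi ->
  stab2_unitary psi ->
  (forall i, invertible (g1 i)) ->
  (forall i, invertible (g2 i)) ->
  pmax_sep (tens2 (normalize (apply g1 psi)) (normalize (apply g2 psi)))
           (tens2 psi psi)
  = pmax_sep (normalize (apply g1 psi)) psi
    * pmax_sep (normalize (apply g2 psi)) psi.
Proof.
move=> psi1 psi_stab /prodop_inverse[h1 [g1h1 h1g1]] /prodop_inverse[h2 [g2h2 h2g2]].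
have psi_iso := stab2_isometric_single psi1 psi_stab.
have psi2_1 : sqnorm (tens2 psi psi) = 1 by rewrite sqnorm_tens2 psi1 mulr1.
have g12h12 i := locmul_tensop (g1h1 i) (g2h2 i).
have h12g12 i := locmul_tensop (h1g1 i) (h2g2 i).
rewrite -normalize_tens2 -apply_tens2.
rewrite (pmax_sepE psi2_1 (stab2_isometric psi_stab) g12h12 h12g12).
rewrite (pmax_sepE psi1 psi_iso g1h1 h1g1) (pmax_sepE psi1 psi_iso g2h2 h2g2).
rewrite max_contraction_tens.
- by rewrite apply_tens2 sqnorm_tens2 invfM mulrACA.
- by exists (apply g1 psi); rewrite apply_inv.
- by exists (apply g2 psi); rewrite apply_inv.
Qed.
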